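(* Let $\alpha,\beta\in(0,1)$, $\gamma>0$, $m=\alpha n^\beta$, and $\lambda^*=\frac{\gamma}{1-\beta}$. Then for all $\lambda<\lambda^*$, $$\lim_{n\to\infty}\frac{\sum_{1\le j\le\lambda m/\log_2 n}\binom{n}{j}}{2^{\gamma m}}=0.$$ *)

From HB Require Import structures.
From mathcomp Require Import all_boot all_order all_algebra.
From mathcomp Require Import all_classical all_reals all_analysis.
Set Implicit Arguments. Unset Strict Implicit. Unset Printing Implicit Defensive.
Import Order.TTheory GRing.Theory Num.Theory.
Local Open Scope ring_scope.

Definition log2 {R : realType} (x : R) : R := ln x / ln 2.

Definition mval {R : realType} (alpha beta : R) (n : nat) : R :=
  alpha * (n%:R `^ beta).

(* sum_{1 <= j <= lambda m / log2 n} C(n, j)  (j ranges over naturals;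
   terms with j > n vanish anyway, so we range over j <= n) *)
Definition binsum {R : realType} (alpha beta lambda : R) (n : nat) : R :=
  \sum_(1 <= j < n.+1 | j%:R <= lambda * mval alpha beta n / log2 (n%:R : R))
     ('C(n, j))%:R.

Definition binom_ratio {R : realType} (alpha beta gamma lambda : R) (n : nat) : R :=
  binsum alpha beta lambda n / (2 `^ (gamma * mval alpha beta n)).

From mathcomp Require Import all_boot all_order all_algebra.
From mathcomp Require Import all_classical all_reals all_analysis.
From mathcomp Require Import ring lra.
Import Order.TTheory GRing.Theory Num.Theory.
Local Open Scope ring_scope.
Local Open Scope classical_set_scope.

(* Exponential-moment (Chernoff) bound: for t >= 0 every binomial coefficient
   C(n, j) with j <= J is at most e^(t(J - j)) C(n, j), so the truncated sum is
   at most e^(tJ) (1 + e^(-t))^n <= exp(tJ + n e^(-t)).  With J = lambda m / log2 n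
   and t = (1 - beta + eta) ln n this gives the bound
   exp((1 - beta + eta) lambda m ln 2 + n^(beta - eta)); since lambda (1 - beta) < gamma
   we may pick eta > 0 with (1 - beta + eta) lambda < gamma, and dividing by
   2^(gamma m) = exp(gamma m ln 2) leaves exp(-c n^beta + n^(beta - eta)) with c > 0,
   which tends to 0. *)

Section binomial_tail.
Context {R : realType}.

Lemma sum_binomial_le_expR (n : nat) (J t : R) : 0 <= t ->
  \sum_(1 <= j < n.+1 | j%:R <= J) ('C(n, j))%:R <=
  expR (t * J + n%:R * expR (- t)).
Proof.
move=> t_ge0.
set w := fun j : nat => expR (t * J) * (expR (- t) ^+ j *+ 'C(n, j)).
have w_ge0 j : 0 <= w j by rewrite mulr_ge0 ?mulrn_wge0 ?exprn_ge0 ?expR_ge0.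
have binomial_le_w j : j%:R <= J -> ('C(n, j))%:R <= w j.
  move=> jJ; have weight_ge1 : 1 <= expR (t * J) * expR (- t) ^+ j.
    rewrite -expRM_natl -expRD; apply: le_trans (expR_ge1Dx _).
    by rewrite lerDl; nra.
  by rewrite /w mulrnAr; apply: ler_wMn2r.
have sum_w : \sum_(j < n.+1) w j = expR (t * J) * (1 + expR (- t)) ^+ n.
  by rewrite -mulr_sumr addrC exprD1n.
apply: (@le_trans _ _ (\sum_(1 <= j < n.+1) w j)).
  rewrite big_mkcond /=; apply: ler_sum => j _.
  by case: ifP => [/binomial_le_w|].
apply: (@le_trans _ _ (\sum_(0 <= j < n.+1) w j)).
  by rewrite [leRHS](@big_ltn _ _ _ 0) // lerDr.
rewrite big_mkord sum_w expRD ler_pM2l ?expR_gt0 // expRM_natl.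
by rewrite lerXn2r ?nnegrE ?addr_ge0 ?expR_ge0 // expR_ge1Dx.
Qed.

Lemma binom_ratio_ge0 (alpha beta gamma lambda : R) (n : nat) :
  0 <= binom_ratio alpha beta gamma lambda n.
Proof.
rewrite /binom_ratio divr_ge0 ?powR_ge0 //.
by apply: sumr_ge0 => j _; exact: ler0n.
Qed.

Lemma binom_ratio_le_expR (alpha beta gamma lambda eta : R) (n : nat) :
  (1 < n)%N -> 0 <= 1 - beta + eta ->
  binom_ratio alpha beta gamma lambda n <=
  expR (((1 - beta + eta) * lambda - gamma) * alpha * ln 2
          * expR (beta * ln (n%:R : R))
        + expR ((beta - eta) * ln (n%:R : R))).
Proof.
move=> n_gt1 eta_ge; set L := ln (n%:R : R).
have L_gt0 : 0 < L by rewrite ln_gt0 // ltr1n.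
have ln2_gt0 : 0 < ln (2 : R) by rewrite ln_gt0 // ltr1n.
have nE : n%:R = expR L by rewrite lnK // posrE ltr0n ltnW.
have mE : mval alpha beta n = alpha * expR (beta * L).
  by rewrite /mval /powR pnatr_eq0 gtn_eqF // ltnW.
have powE : (2 : R) `^ (gamma * mval alpha beta n) =
    expR (gamma * mval alpha beta n * ln 2).
  by rewrite /powR pnatr_eq0.
set t := (1 - beta + eta) * L.
have t_ge0 : 0 <= t by rewrite mulr_ge0 // ltW.
set J := lambda * mval alpha beta n / log2 (n%:R : R).
have exponentE : t * J + n%:R * expR (- t) =
    ((1 - beta + eta) * lambda - gamma) * alpha * ln 2 * expR (beta * L)
    + expR ((beta - eta) * L) + gamma * mval alpha beta n * ln 2.
  have -> : n%:R * expR (- t) = expR ((beta - eta) * L).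
    by rewrite nE -expRD; congr expR; rewrite /t; ring.
  by rewrite /t /J /log2 -/L mE; field; rewrite !gt_eqF.
rewrite /binom_ratio /binsum powE ler_pdivrMr ?expR_gt0 // -expRD -exponentE.
exact: sum_binomial_le_expR.
Qed.

Lemma dominant_expR_cvgNy {a b e : R} : a < 0 -> 0 < b -> 0 < e ->
  a * expR (b * x) + expR ((b - e) * x) @[x --> +oo] --> -oo.
Proof.
move=> a_lt0 b_gt0 e_gt0; apply/cvgrNyPle => A.
have Na2_gt0 : 0 < - a / 2 by lra.
have a2_lt0 : a / 2 < 0 by lra.
near=> x.
have tail_small : expR (- (e * x)) <= - a / 2.
  by rewrite -(lnK Na2_gt0) ler_expR lerNl -ler_pdivrMl.
have linear_le : a / 2 * (1 + b * x) <= A.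
  have : b^-1 * ((a / 2)^-1 * A - 1) <= x by [].
  by rewrite ler_pdivrMl // lerBlDl ler_ndivrMl.
have -> : a * expR (b * x) + expR ((b - e) * x) =
    expR (b * x) * (a + expR (- (e * x))).
  by rewrite mulrDr -expRD mulrC; congr (_ + expR _); ring.
apply: le_trans linear_le.
have := expR_ge1Dx (b * x); have := expR_gt0 (b * x); nra.
Unshelve. all: by end_near.
Qed.

Lemma ln_natr_cvgy : ln (n%:R : R) @[n --> \oo] --> +oo.
Proof.
apply/cvgryPge => A; near=> n.
have n_ge : expR A <= n%:R by near: n; exact: cvgry_ge cvgr_idn _.
by rewrite -(expRK A) ler_ln ?posrE ?expR_gt0 // (lt_le_trans (expR_gt0 A)).
Unshelve. all: by end_near.
Qed.

Lemma cvgNy_expR T (F : set_system T) (FF : Filter F) (f : T -> R) :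
  f @ F --> -oo -> expR (f x) @[x --> F] --> 0.
Proof.
move/cvgNry => Nf_cvgy; have := cvg_comp _ _ Nf_cvgy (@cvgr_expR R).
by under eq_cvg do rewrite /= opprK.
Qed.

Lemma exists_gt0_mulDl_lt (c y z : R) : c * z < y ->
  exists2 e : R, 0 < e & (c + e) * z < y.
Proof.
move=> czy; have z1_gt0 : 0 < `|z| + 1 by rewrite ltr_pwDr.
set e := (y - c * z) / (2 * (`|z| + 1)).
have e_gt0 : 0 < e by rewrite divr_gt0 ?mulr_gt0 // subr_gt0.
have eE : e * (`|z| + 1) = (y - c * z) / 2.
  by rewrite /e; field; rewrite gt_eqF.
have := ler_wpM2l (ltW e_gt0) (ler_norm z).
by exists e => //; lra.
Qed.

End binomial_tail.

Theorem lemma9 (R : realType) (alpha beta gamma lambda : R)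
  (ha0 : 0 < alpha) (ha1 : alpha < 1) (hb0 : 0 < beta) (hb1 : beta < 1)
  (hg : 0 < gamma) (hl : lambda < gamma / (1 - beta)) :
  binom_ratio alpha beta gamma lambda @ \oo --> 0.
Proof.
have [eta eta_gt0 eta_lt] : exists2 eta : R,
    0 < eta & (1 - beta + eta) * lambda < gamma.
  by apply: exists_gt0_mulDl_lt; rewrite mulrC -ltr_pdivlMr // subr_gt0.
set a := ((1 - beta + eta) * lambda - gamma) * alpha * ln (2 : R).
have a_lt0 : a < 0 by rewrite /a !pmulr_llt0 ?ln_gt0 ?ltr1n // subr_lt0.
set bound := fun n : nat =>
  expR (a * expR (beta * ln (n%:R : R)) + expR ((beta - eta) * ln (n%:R : R))).
have bound_cvg0 : bound @ \oo --> 0.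
  apply: cvgNy_expR.
  exact: cvg_comp ln_natr_cvgy (dominant_expR_cvgNy a_lt0 hb0 eta_gt0).
apply: (squeeze_cvgr (f := cst 0) (h := bound) _ (cvg_cst 0) bound_cvg0).
near=> n; rewrite binom_ratio_ge0 /=.
apply: binom_ratio_le_expR; last by lra.
by near: n; exists 2.
Unshelve. all: by end_near.
Qed.
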